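(* Let $Z$ be a weakly efficient solution of the SDP relaxation described in the context, with first-row data $(z_+,z_-,\rho)$. If $\rho=1$, then $(z_+,z_-,1)$ is feasible and weakly efficient for the QCQP.
   Context: Let $k,m,n\in\mathbb{N}$. Let $A_c,A_\delta\in\mathbb{R}^{m\times n}$ with $A_\delta\ge 0$ entrywise, $b_c,b_\delta\in\mathbb{R}^m$ with $b_\delta\ge0$, $G\in\mathbb{R}^{k\times n}$, and $\ell,u\in\mathbb{R}^n$ with $\ell\le u$. All vector inequalities are componentwise. QCQP: variables $x_+,x_-\in\mathbb{R}^n_{\ge0}$, $r\in[0,1]$, subject to $A_cx_+-A_cx_-+rA_\delta x_++rA_\delta x_-+rb_\delta-b_c\le0$ and $\ell\le x_+-x_-\le u$; vector objective $F(x_+,x_-,r)=(G(x_+-x_-),-r)\in\mathbb{R}^{k+1}$, minimized in the Pareto sense. SDP relaxation: variable a symmetric positive semidefinite matrix $Z$ of size $(2n+2)\times(2n+2)$ written in block form with row/column blocks of sizes $1,n,n,1$: $Z=\begin{pmatrix} Z_{00} & z_+^T & z_-^T & \rho\\ z_+ & * & * & w_+\\ z_- & * & * & w_-\\ \rho & w_+^T & w_-^T & \sigma\end{pmatrix}$, with $z_\pm,w_\pm\in\mathbb{R}^n$, $\rho,\sigma\in\mathbb{R}$. Constraints: $Z_{00}=1$; $A_cz_+-A_cz_-+A_\delta(w_++w_-)+\rho\, b_\delta-b_c\le0$; $\ell\le z_+-z_-\le u$; $z_+,z_-\ge0$, $\rho\ge0$, $w_+,w_-\ge0$; $\sigma\le1$.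 Vector objective $(G(z_+-z_-),-\rho)\in\mathbb{R}^{k+1}$, minimized in the Pareto sense. Efficiency (for minimizing a vector function $f$ over a feasible set $\mathcal{X}$): $x^*\in\mathcal{X}$ is efficient if there is no $x\in\mathcal{X}$ with $f(x)\le f(x^* )$ and $f(x)\ne f(x^* )$; weakly efficient if there is no $x\in\mathcal{X}$ with $f(x)<f(x^* )$ (all components strict). *)

From HB Require Import structures.
From mathcomp Require Import all_boot all_order all_algebra.
Set Implicit Arguments. Unset Strict Implicit. Unset Printing Implicit Defensive.
Import Order.TTheory GRing.Theory Num.Theory.
Local Open Scope ring_scope.

Section Defs.
Variable R : realFieldType.

Definition mle (p q : nat) (u v : 'M[R]_(p, q)) : Prop :=
  forall i j, u i j <= v i j.

Definition weakly_efficient (X : Type) (p : nat) (feas : X -> Prop)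
  (f : X -> 'cV[R]_p) (x : X) : Prop :=
  feas x /\ ~ (exists y, feas y /\ forall i, f y i 0 < f x i 0).

Definition qcqp_feasible (m n : nat) (Ac Ad : 'M[R]_(m, n)) (bc bd : 'cV[R]_m)
  (l u : 'cV[R]_n) (v : 'cV[R]_n * 'cV[R]_n * R) : Prop :=
  let: (xp, xm, r) := v in
  mle 0 xp /\ mle 0 xm /\ 0 <= r /\ r <= 1 /\
  mle (Ac *m xp - Ac *m xm + r *: (Ad *m xp) + r *: (Ad *m xm) + r *: bd - bc) 0 /\
  mle l (xp - xm) /\ mle (xp - xm) u.

Definition qcqp_obj (k n : nat) (G : 'M[R]_(k, n))
  (v : 'cV[R]_n * 'cV[R]_n * R) : 'cV[R]_(k + 1) :=
  let: (xp, xm, r) := v in col_mx (G *m (xp - xm)) (- r)%:M.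

(* ---------------- SDP relaxation ----------------
   Z has size (2n+2) x (2n+2); blocks of sizes 1, n, n, 1. *)
Definition idx0 (n : nat) : 'I_(n.*2.+2) := ord0.
Definition idxP (n : nat) (i : 'I_n) : 'I_(n.*2.+2) := inord i.+1.
Definition idxM (n : nat) (i : 'I_n) : 'I_(n.*2.+2) := inord (n + i).+1.
Definition idxL (n : nat) : 'I_(n.*2.+2) := ord_max.

Definition sdp_zp n (Z : 'M[R]_(n.*2.+2)) : 'cV[R]_n := \col_i Z (idxP i) (idx0 n).
Definition sdp_zm n (Z : 'M[R]_(n.*2.+2)) : 'cV[R]_n := \col_i Z (idxM i) (idx0 n).
Definition sdp_wp n (Z : 'M[R]_(n.*2.+2)) : 'cV[R]_n := \col_i Z (idxP i) (idxL n).
Definition sdp_wm n (Z : 'M[R]_(n.*2.+2)) : 'cV[R]_n := \col_i Z (idxM i) (idxL n).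
Definition sdp_rho n (Z : 'M[R]_(n.*2.+2)) : R := Z (idx0 n) (idxL n).
Definition sdp_sigma n (Z : 'M[R]_(n.*2.+2)) : R := Z (idxL n) (idxL n).

Definition psd (p : nat) (Z : 'M[R]_p) : Prop :=
  Z^T = Z /\ forall x : 'cV[R]_p, 0 <= (x^T *m Z *m x) 0 0.

Definition sdp_feasible (m n : nat) (Ac Ad : 'M[R]_(m, n)) (bc bd : 'cV[R]_m)
  (l u : 'cV[R]_n) (Z : 'M[R]_(n.*2.+2)) : Prop :=
  psd Z /\ Z (idx0 n) (idx0 n) = 1 /\
  mle (Ac *m sdp_zp Z - Ac *m sdp_zm Z + Ad *m (sdp_wp Z + sdp_wm Z)
       + sdp_rho Z *: bd - bc) 0 /\
  mle l (sdp_zp Z - sdp_zm Z) /\ mle (sdp_zp Z - sdp_zm Z) u /\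
  mle 0 (sdp_zp Z) /\ mle 0 (sdp_zm Z) /\ 0 <= sdp_rho Z /\
  mle 0 (sdp_wp Z) /\ mle 0 (sdp_wm Z) /\ sdp_sigma Z <= 1.

Definition sdp_obj (k n : nat) (G : 'M[R]_(k, n)) (Z : 'M[R]_(n.*2.+2))
  : 'cV[R]_(k + 1) :=
  col_mx (G *m (sdp_zp Z - sdp_zm Z)) (- sdp_rho Z)%:M.

End Defs.

(** Weak efficiency of the relaxed point is automatic: the last objective
    component of the QCQP is [-r >= -1], so nothing beats [r = 1].  For
    feasibility, the only gap between the SDP and the QCQP constraints is the
    replacement of [r x] by the last column [w] of [Z].  When
    [Z_00 = rho = 1 >= sigma], the vector [e_0 - e_last] is isotropic for the
    positive semidefinite form of [Z]; an isotropic vector of such a form lies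
    in its kernel, so the first and last columns of [Z] coincide and
    [w = z = rho z]. *)

From HB Require Import structures.
From mathcomp Require Import all_boot all_order all_algebra.
From mathcomp Require Import ring lra.
Set Implicit Arguments. Unset Strict Implicit. Unset Printing Implicit Defensive.
Import Order.TTheory GRing.Theory Num.Theory.
Local Open Scope ring_scope.

Section BilinearForm.
Variables (R : realFieldType) (p : nat) (Z : 'M[R]_p).

Definition mxform (x y : 'cV[R]_p) : R := (x^T *m Z *m y) 0 0.

Lemma mxformDl x y z : mxform (x + y) z = mxform x z + mxform y z.
Proof. by rewrite /mxform linearD /= !mulmxDl mxE. Qed.

Lemma mxformDr x y z : mxform x (y + z) = mxform x y + mxform x z.
Proof. by rewrite /mxform mulmxDr mxE. Qed.

Lemma mxformZl a x y : mxform (a *: x) y = a * mxform x y.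
Proof. by rewrite /mxform linearZ /= -!scalemxAl mxE. Qed.

Lemma mxformZr a x y : mxform x (a *: y) = a * mxform x y.
Proof. by rewrite /mxform -scalemxAr mxE. Qed.

Lemma mxform_delta (i j : 'I_p) : mxform (delta_mx i 0) (delta_mx j 0) = Z i j.
Proof. by rewrite /mxform trmx_delta -rowE -colE !mxE. Qed.

Lemma mxformC : Z^T = Z -> forall x y, mxform x y = mxform y x.
Proof.
move=> symZ x y; rewrite /mxform.
have -> : y^T *m Z *m x = (x^T *m Z *m y)^T by rewrite !trmx_mul trmxK symZ mulmxA.
by rewrite [RHS]mxE.
Qed.

End BilinearForm.
Arguments mxform {R p} Z x y.

Lemma quadratic_ge0_lin_coef0 (R : realFieldType) (b c : R) :
  (forall t, 0 <= b * t + c * t ^+ 2) -> b = 0.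
Proof.
move=> nonneg; apply/eqP; apply: contraT => b_neq0.
have b2_gt0 : 0 < b ^+ 2 by rewrite lt_def sqrf_eq0 b_neq0 sqr_ge0.
have [c_le0 | c_gt0] := lerP c 0.
  by have := nonneg (- b); nra.
have := nonneg (- b / (2 * c)).
have -> : b * (- b / (2 * c)) + c * (- b / (2 * c)) ^+ 2 = - (b ^+ 2 / (4 * c)).
  by field; rewrite gt_eqF.
by rewrite oppr_ge0 lt_geF // divr_gt0 // mulr_gt0.
Qed.

Lemma psd_isotropic_kernel (R : realFieldType) p (Z : 'M[R]_p) (v w : 'cV[R]_p) :
  psd Z -> mxform Z v v = 0 -> mxform Z v w = 0.
Proof.
move=> [symZ posZ] iso_v.
suff /eqP : mxform Z v w *+ 2 = 0 by rewrite mulrn_eq0 => /eqP.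
apply: (@quadratic_ge0_lin_coef0 R _ (mxform Z w w)) => t.
have := posZ (v + t *: w); rewrite -/(mxform Z _ _).
rewrite !(mxformDl, mxformDr, mxformZl, mxformZr) iso_v (mxformC symZ w v).
by congr (_ <= _); ring.
Qed.

Lemma psd_col_eq (R : realFieldType) p (Z : 'M[R]_p) (a b : 'I_p) :
  psd Z -> Z a a = 1 -> Z a b = 1 -> Z b b <= 1 -> forall i, Z i a = Z i b.
Proof.
move=> psdZ Zaa Zab Zbb i.
have symZ : forall x y, Z x y = Z y x by move=> x y; rewrite -{1}psdZ.1 mxE.
pose e q : 'cV[R]_p := delta_mx q 0.
have expand w : mxform Z (e a - e b) w = mxform Z (e a) w - mxform Z (e b) w.
  by rewrite -scaleN1r mxformDl mxformZl mulN1r.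
have iso : mxform Z (e a - e b) (e a - e b) = 0.
  have := psdZ.2 (e a - e b); rewrite -/(mxform Z _ _) !expand.
  rewrite -!scaleN1r !mxformDr !mxformZr !mxform_delta (symZ b a) Zaa Zab.
  lra.
have := psd_isotropic_kernel (e i) psdZ iso; rewrite expand !mxform_delta.
by rewrite (symZ a i) (symZ b i) => /eqP; rewrite subr_eq0 => /eqP.
Qed.

Section Relaxation.
Variables (R : realFieldType) (k m n : nat).
Variables (Ac Ad : 'M[R]_(m, n)) (bc bd : 'cV[R]_m) (G : 'M[R]_(k, n)).
Variables (l u : 'cV[R]_n).

Lemma sdp_w_eq_z (Z : 'M[R]_(n.*2.+2)) :
  sdp_feasible Ac Ad bc bd l u Z -> sdp_rho Z = 1 ->
  sdp_wp Z = sdp_zp Z /\ sdp_wm Z = sdp_zm Z.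
Proof.
move=> [psdZ [Z00 [_ [_ [_ [_ [_ [_ [_ [_ sigma_le1]]]]]]]]]] rho1.
have col_eq := psd_col_eq psdZ Z00 rho1 sigma_le1.
by split; apply/matrixP => i j; rewrite !mxE col_eq.
Qed.

Lemma sdp_rho1_qcqp_feasible (Z : 'M[R]_(n.*2.+2)) :
  sdp_feasible Ac Ad bc bd l u Z -> sdp_rho Z = 1 ->
  qcqp_feasible Ac Ad bc bd l u (sdp_zp Z, sdp_zm Z, 1).
Proof.
move=> feasZ rho1; have [wpE wmE] := sdp_w_eq_z feasZ rho1.
move: feasZ => [_ [_ [lin [lo [up [zp_ge0 [zm_ge0 _]]]]]]].
rewrite wpE wmE rho1 mulmxDr !addrA !scale1r in lin.
by do !split => //; rewrite !scale1r.
Qed.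

Lemma qcqp_weakly_efficient_r1 (xp xm : 'cV[R]_n) :
  qcqp_feasible Ac Ad bc bd l u (xp, xm, 1) ->
  weakly_efficient (qcqp_feasible Ac Ad bc bd l u) (qcqp_obj G) (xp, xm, 1).
Proof.
move=> feas; split => // -[[[yp ym] r] [[_ [_ [_ [r_le1 _]]]] better]].
have := better (rshift k ord0).
by rewrite /qcqp_obj !col_mxEd !mxE /= ltrN2 => /(le_lt_trans r_le1); rewrite ltxx.
Qed.

End Relaxation.

Theorem mainTheorem4 (R : realFieldType) (k m n : nat)
  (Ac Ad : 'M[R]_(m, n)) (bc bd : 'cV[R]_m) (G : 'M[R]_(k, n))
  (l u : 'cV[R]_n) (Z : 'M[R]_(n.*2.+2)) :
  (forall i j, 0 <= Ad i j) -> mle 0 bd -> mle l u ->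
  weakly_efficient (sdp_feasible Ac Ad bc bd l u) (sdp_obj G) Z ->
  sdp_rho Z = 1 ->
  weakly_efficient (qcqp_feasible Ac Ad bc bd l u) (qcqp_obj G)
    (sdp_zp Z, sdp_zm Z, 1).
Proof.
move=> _ _ _ [feasZ _] rho1.
by apply: qcqp_weakly_efficient_r1; apply: sdp_rho1_qcqp_feasible.
Qed.
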